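(* Let $f:X\to X$ be a continuous map on a metric space $(X,d)$. The following are equivalent: (i) $(\mathcal{K}(X),\overline f)$ has the specification property; (ii) $(\mathcal{F}_\infty(X),\hat f)$ has the specification property; (iii) $(\mathcal{F}_0(X),\hat f)$ has the specification property; (iv) $(\mathcal{F}_S(X),\hat f)$ has the specification property; (v) $(\mathcal{F}_E(X),\hat f)$ has the specification property.
   Context: A continuous map $g$ on a metric space $(Y,\rho)$ has the specification property if for every $\varepsilon>0$ there is $N_\varepsilon\in\mathbb{N}$ such that for every integer $s\ge2$, every $y_1,\dots,y_s\in Y$ and every integers $0=i_1\le j_1<i_2\le j_2<\dots<i_s\le j_s$ with $i_{r+1}-j_r\ge N_\varepsilon$ for $1\le r<s$, there is $x\in Y$ with $\rho(g^j(x),g^j(y_r))<\varepsilon$ for all $1\le r\le s$ and $i_r\le j\le j_r$, and $g^{N_\varepsilon+j_s}(x)=x$. $\mathbb{I}=[0,1]$. Fuzzy setting: for $u:X\to\mathbb{I}$, $u_\alpha=\{x:u(x)\ge\alpha\}$ ($\alpha\in]0,1]$), $u_0=\overline{\{x:u(x)>0\}}$. $\mathcal{F}(X)$: upper-semicontinuous $u:X\to\mathbb{I}$ with $u_0$ compact and $u_1\ne\varnothing$. $\mathcal{K}(X)$: non-empty compact subsets with Hausdorff metric $d_H$; $\overline f(K)=f(K)$. Zadeh extension: $\hat f(u)(x)=\sup\{u(y):f(y)=x\}$ (and $0$ if $f^{-1}(\{x\})=\varnothing$). Metrics on $\mathcal{F}(X)$: $d_\infty(u,v)=\sup_{\alpha\in\mathbb{I}}d_H(u_\alpha,v_\alpha)$;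 $d_0(u,v)=\inf\{\varepsilon>0:\exists\xi\in\mathcal{T},\ \sup_\alpha|\xi(\alpha)-\alpha|\le\varepsilon,\ d_\infty(u,\xi\circ v)\le\varepsilon\}$ with $\mathcal{T}$ the strictly increasing homeomorphisms of $\mathbb{I}$; with $\overline d((x,\alpha),(y,\beta))=\max\{d(x,y),|\alpha-\beta|\}$, $\operatorname{end}(u)=\{(x,\alpha):u(x)\ge\alpha\}$, $\operatorname{send}(u)=\operatorname{end}(u)\cap(u_0\times\mathbb{I})$, $d_E$ and $d_S$ are the $\overline d$-Hausdorff distances of endographs and sendographs respectively. $\mathcal{F}_\rho(X)$ denotes $(\mathcal{F}(X),\rho)$. *)

From HB Require Import structures.
From mathcomp Require Import all_boot all_order all_algebra.
From mathcomp Require Import boolp classical_sets reals ereal.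
Set Implicit Arguments. Unset Strict Implicit. Unset Printing Implicit Defensive.
Import Order.TTheory GRing.Theory Num.Theory.
Local Open Scope classical_set_scope.
Local Open Scope ring_scope.

Section Defs.
Variable R : realType.

Definition is_metric {X : Type} (d : X -> X -> R) : Prop :=
  (forall x y, 0 <= d x y) /\ (forall x y, d x y = 0 <-> x = y) /\
  (forall x y, d x y = d y x) /\ (forall x y z, d x z <= d x y + d y z).

Definition dcontinuous {X : Type} (d : X -> X -> R) (f : X -> X) : Prop :=
  forall x (e : R), 0 < e -> exists r : R, 0 < r /\
    forall y, d x y < r -> d (f x) (f y) < e.

Definition dopen {X : Type} (d : X -> X -> R) (U : set X) : Prop :=
  forall x, U x -> exists r : R, 0 < r /\ forall y, d x y < r -> U y.

Definition dcompact {X : Type} (d : X -> X -> R) (K : set X) : Prop :=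
  forall (I : Type) (U : I -> set X), (forall i, dopen d (U i)) ->
    (forall x, K x -> exists i, U i x) ->
    exists (n : nat) (g : nat -> I), forall x, K x -> exists k, (k < n)%N /\ U (g k) x.

Definition dclosure {X : Type} (d : X -> X -> R) (S : set X) : set X :=
  [set x | forall e : R, 0 < e -> exists y, S y /\ d x y < e].

Definition hausdorff {T : Type} (dist : T -> T -> R) (A B : set T) : \bar R :=
  maxe (ereal_sup [set ereal_inf [set (dist a b)%:E | b in B] | a in A])
       (ereal_sup [set ereal_inf [set (dist a b)%:E | a in A] | b in B]).

Definition inK {X : Type} (d : X -> X -> R) : set (set X) :=
  [set K | K !=set0 /\ dcompact d K].

Definition image_map {X : Type} (f : X -> X) : set X -> set X := fun K => f @` K.

Definition usc {X : Type} (d : X -> X -> R) (u : X -> R) : Prop :=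
  forall x (t : R), u x < t -> exists r : R, 0 < r /\ forall y, d x y < r -> u y < t.

Definition level {X : Type} (d : X -> X -> R) (u : X -> R) (a : R) : set X :=
  if 0 < a then [set x | a <= u x] else dclosure d [set x | 0 < u x].

Definition inF {X : Type} (d : X -> X -> R) : set (X -> R) :=
  [set u | (forall x, 0 <= u x <= 1) /\ usc d u /\ dcompact d (level d u 0)
           /\ level d u 1 !=set0].

Definition zadeh {X : Type} (f : X -> X) (u : X -> R) : X -> R :=
  fun x => if `[< exists y, f y = x >] then sup [set u y | y in [set y | f y = x]]
           else 0.

Definition inI : set R := [set a | 0 <= a <= 1].

Definition d_inf {X : Type} (d : X -> X -> R) (u v : X -> R) : \bar R :=
  ereal_sup [set hausdorff d (level d u a) (level d v a) | a in inI].

(* strictly increasing homeomorphisms of I (as maps R -> R, restricted to I) *)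
Definition homeoI (xi : R -> R) : Prop :=
  (forall a b, 0 <= a -> a < b -> b <= 1 -> xi a < xi b) /\
  (forall a, inI a -> inI (xi a)) /\
  (forall b, inI b -> exists a, inI a /\ xi a = b) /\
  (forall a, inI a -> forall e : R, 0 < e -> exists r : R, 0 < r /\
      forall b, inI b -> `|a - b| < r -> `|xi a - xi b| < e) /\
  (exists xi' : R -> R, (forall a, inI a -> inI (xi' a) /\ xi' (xi a) = a /\ xi (xi' a) = a) /\
      forall a, inI a -> forall e : R, 0 < e -> exists r : R, 0 < r /\
      forall b, inI b -> `|a - b| < r -> `|xi' a - xi' b| < e).

Definition d_0 {X : Type} (d : X -> X -> R) (u v : X -> R) : \bar R :=
  ereal_inf [set e%:E | e in [set e : R | 0 < e /\ exists xi, homeoI xi /\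
     (ereal_sup [set `|xi a - a|%:E | a in inI] <= e%:E)%E /\
     (d_inf d u (xi \o v) <= e%:E)%E]].

Definition dbar {X : Type} (d : X -> X -> R) (p q : X * R) : R :=
  Num.max (d p.1 q.1) `|p.2 - q.2|.

Definition endo {X : Type} (u : X -> R) : set (X * R) :=
  [set p | inI p.2 /\ p.2 <= u p.1].

Definition sendo {X : Type} (d : X -> X -> R) (u : X -> R) : set (X * R) :=
  [set p | endo u p /\ level d u 0 p.1].

Definition d_E {X : Type} (d : X -> X -> R) (u v : X -> R) : \bar R :=
  hausdorff (dbar d) (endo u) (endo v).

Definition d_S {X : Type} (d : X -> X -> R) (u v : X -> R) : \bar R :=
  hausdorff (dbar d) (sendo d u) (sendo d v).

(* ---------- specification property on (P, rho) for g ----------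
   points y_1..y_s are y 0 .. y (s-1); times i_r, j_r are i (r-1), j (r-1) *)
Definition spec_prop {Y : Type} (P : set Y) (rho : Y -> Y -> \bar R) (g : Y -> Y) : Prop :=
  forall eps : R, 0 < eps -> exists N : nat,
    forall (s : nat) (y : nat -> Y) (i j : nat -> nat),
      (2 <= s)%N -> (forall r, (r < s)%N -> P (y r)) ->
      i 0%N = 0%N -> (forall r, (r < s)%N -> (i r <= j r)%N) ->
      (forall r, (r.+1 < s)%N -> (j r < i r.+1)%N /\ (N <= i r.+1 - j r)%N) ->
      exists x, P x /\
        (forall r k, (r < s)%N -> (i r <= k <= j r)%N ->
            (rho (iter k g x) (iter k g (y r)) < eps%:E)%E) /\
        iter (N + j s.-1) g x = x.

End Defs.

(* Cuts turn the problem into one about compact sets: the Zadeh extension acts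
   on every cut by the image under [f], and a compact set [K] is the fuzzy set
   [indicator K], all of whose cuts equal [K].  Specification for fuzzy sets
   gives specification for K(X) by applying it to indicators and taking
   1/2-cuts, since at scales below 1/2 each of the four metrics between a fuzzy
   set and an indicator bounds the Hausdorff distance of their 1/2-cuts.
   Conversely, for fuzzy sets v_r finitely many levels G suffice: every point
   of a cut of an iterate f^k v_r lies within eps/4 of a higher cut with level
   in G.  Specification in K(X), applied to the g-cuts for each g in G, gives
   periodic compact sets C_g, and the fuzzy set x |-> max {g in G | x in C_g}
   has cuts whose iterates stay eps/2-close to those of the v_r, which bounds
   all four metrics. *)

From HB Require Import structures.
From mathcomp Require Import all_boot all_order all_algebra.
From mathcomp Require Import boolp classical_sets reals ereal.
From mathcomp Require Import lra.
Set Implicit Arguments. Unset Strict Implicit. Unset Printing Implicit Defensive.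
Import Order.TTheory GRing.Theory Num.Theory.
Local Open Scope classical_set_scope.
Local Open Scope ring_scope.

Lemma finite_max_lt (R : realType) (n : nat) (t : nat -> R) (a : R) :
  (forall k, (k < n)%N -> t k < a) ->
  exists2 T, T < a & forall k, (k < n)%N -> t k <= T.
Proof.
elim: n => [|n IH] lt_ta; first by exists (a - 1) => //; lra.
have [T Ta leT] := IH (fun k kn => lt_ta k (ltnW kn)).
exists (Num.max T (t n)); first by rewrite gt_max Ta lt_ta.
move=> k; rewrite ltnS leq_eqVlt => /orP[/eqP->|kn]; first by rewrite le_max lexx orbT.
by rewrite le_max leT.
Qed.

Lemma common_superseq (T : eqType) (Q : pred T) (n : nat) (P : nat -> seq T -> Prop) :
  (forall k s s', {subset s <= s'} -> P k s -> P k s') ->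
  (forall k, (k < n)%N -> exists2 s, all Q s & P k s) ->
  exists2 s, all Q s & forall k, (k < n)%N -> P k s.
Proof.
move=> Pmono; elim: n => [|n IH] Pex; first by exists [::].
have [s Qs Ps] := IH (fun k kn => Pex k (ltnW kn)).
have [s' Qs' Ps'] := Pex n (ltnSn n).
exists (s ++ s'); first by rewrite all_cat Qs Qs'.
move=> k; rewrite ltnS leq_eqVlt => /orP[/eqP->|kn].
  by apply: Pmono Ps' => x xs'; rewrite mem_cat xs' orbT.
by apply: Pmono (Ps k kn) => x xs; rewrite mem_cat xs.
Qed.

Lemma iter_image_bigcup (X I : Type) (f : X -> X) (P : set I) (F : I -> set X) k :
  iter k (image_map f) (\bigcup_(i in P) F i) = \bigcup_(i in P) iter k (image_map f) (F i).
Proof. by elim: k => //= k ->; rewrite /image_map image_bigcup. Qed.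

Section MetricSpace.
Variables (R : realType) (X : Type) (d : X -> X -> R).
Hypothesis dm : is_metric d.

Lemma metric_ge0 x y : 0 <= d x y. Proof. by case: dm. Qed.
Lemma metric_xx x : d x x = 0. Proof. by case: dm => _ [eq0 _]; apply/eq0. Qed.
Lemma metric_eq0 x y : d x y = 0 -> x = y. Proof. by case: dm => _ [eq0 _] /eq0. Qed.
Lemma metricC x y : d x y = d y x. Proof. by case: dm => _ [_ []]. Qed.
Lemma metric_triangle x y z : d x z <= d x y + d y z. Proof. by case: dm => _ [_ [_]]. Qed.

Lemma metric_gt0 x y : x <> y -> 0 < d x y.
Proof. by move=> xy; rewrite lt_neqAle metric_ge0 andbT eq_sym; apply/eqP => /metric_eq0. Qed.

Definition dclosed (A : set X) := dclosure d A `<=` A.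

Lemma dclosed_cball x r : dclosed [set y | d x y <= r].
Proof.
move=> y cly /=; rewrite leNgt; apply/negP => lt_r.
have [z [/= dxz dyz]] := cly (d x y - r) ltac:(lra).
by have := metric_triangle x z y; rewrite (metricC z y); lra.
Qed.

Lemma closure_sub (A : set X) : A `<=` dclosure d A.
Proof. by move=> x Ax e e0; exists x; rewrite metric_xx. Qed.

Lemma closure_mono (A B : set X) : A `<=` B -> dclosure d A `<=` dclosure d B.
Proof. by move=> AB x clx e /clx [y [/AB By dxy]]; exists y. Qed.

Lemma dclosed_closure (A : set X) : dclosed (dclosure d A).
Proof.
move=> x clx e e0; have [y [cly dxy]] := clx (e / 2) ltac:(lra).
have [z [Az dyz]] := cly (e / 2) ltac:(lra).
by exists z; split => //; have := metric_triangle x y z; lra.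
Qed.

Lemma dclosed_ball_compl (A : set X) x : dclosed A -> ~ A x ->
  exists2 r, 0 < r & forall y, d x y < r -> ~ A y.
Proof.
move=> Acl nAx; apply: contrapT => noball; apply/nAx/Acl => e e0.
apply: contrapT => far; apply: noball; exists e => // y dxy Ay.
by apply: far; exists y.
Qed.

Lemma dcompactU (A B : set X) : dcompact d A -> dcompact d B -> dcompact d (A `|` B).
Proof.
move=> Ac Bc I U Uo cover.
have [n1 [g1 cover1]] := Ac I U Uo (fun x Ax => cover x (or_introl Ax)).
have [n2 [g2 cover2]] := Bc I U Uo (fun x Bx => cover x (or_intror Bx)).
exists (n1 + n2)%N, (fun k => if (k < n1)%N then g1 k else g2 (k - n1)%N).
move=> x [/cover1 [k [kn Uk]]|/cover2 [k [kn Uk]]].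
  by exists k; rewrite kn ltn_addr.
exists (n1 + k)%N; rewrite ltn_add2l addKn; split => //.
by rewrite ltnNge leq_addr.
Qed.

Lemma dcompact_bigcup_seq (I : choiceType) (s : seq I) (C : I -> set X) :
  s != [::] -> (forall i, i \in s -> dcompact d (C i)) ->
  dcompact d (\bigcup_(i in [set` s]) C i).
Proof.
rewrite bigcup_seq; elim: s => [//|i s IH] _ Cc.
rewrite big_cons; have Cic : dcompact d (C i) by apply: Cc; rewrite mem_head.
case: s IH Cc => [|j s] IH Cc; first by rewrite big_nil setU0.
by apply: dcompactU => //; apply: IH => // k ks; apply: Cc; rewrite inE ks orbT.
Qed.

(* [C !=set0] is needed: [dcompact] quantifies over all index types, empty
   ones included, so the empty set is not [dcompact]. *)
Lemma dcompact_closed_sub (K C : set X) : dcompact d K -> C `<=` K ->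
  dclosed C -> C !=set0 -> dcompact d C.
Proof.
move=> Kc CK Ccl [c0 Cc0] I U Uo cover.
have [i0 _] := cover c0 Cc0.
pose V (o : option I) := if o is Some i then U i else ~` C.
have Vo o : dopen d (V o).
  case: o => [i|]; first exact: Uo.
  by move=> x /= nCx; have [r r0 far] := dclosed_ball_compl Ccl nCx; exists r.
have coverV x : K x -> exists o, V o x.
  by move=> Kx; have [/cover [i Ui]|nCx] := EM (C x); [exists (Some i)|exists None].
have [n [g gcover]] := Kc _ V Vo coverV.
exists n, (fun k => if g k is Some i then i else i0) => x Cx.
have [k [kn Vk]] := gcover x (CK x Cx); exists k; split => //.
by case: (g k) Vk.
Qed.

Lemma usc_compact_ge (K : set X) (u : X -> R) (a : R) : dcompact d K -> usc d u ->
  (forall t, t < a -> exists2 x, K x & t < u x) -> exists2 x, K x & a <= u x.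
Proof.
move=> Kc uc approx; apply: contrapT => noattain.
have lt_ua x : K x -> u x < a.
  by move=> Kx; rewrite ltNge; apply/negP => aux; apply: noattain; exists x.
pose U (z : {x | K x}) := [set v | exists2 r, 0 < r &
  (forall w, d (sval z) w < r -> u w < (u (sval z) + a) / 2) /\ d (sval z) v < r].
have Uo z : dopen d (U z).
  move=> v [r r0 [lt_u dv]]; exists (r - d (sval z) v); split; first lra.
  by move=> w dw; exists r => //; split => //; have := metric_triangle (sval z) v w; lra.
have cover x : K x -> exists z, U z x.
  move=> Kx; have [r [r0 lt_u]] := uc x ((u x + a) / 2) ltac:(have := lt_ua x Kx; lra).
  by exists (exist _ x Kx); exists r => //=; rewrite metric_xx.
have [n [g gcover]] := Kc _ U Uo cover.
have [T Ta leT] := @finite_max_lt R n (fun k => (u (sval (g k)) + a) / 2) a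
  (fun k _ => ltac:(have := lt_ua _ (proj2_sig (g k)); lra)).
have [x Kx Tx] := approx T Ta.
have [k [kn [r _ [lt_u dx]]]] := gcover x Kx.
by have := lt_u x dx; have := leT k kn; lra.
Qed.

Lemma dcompact_closed (K : set X) : dcompact d K -> dclosed K.
Proof.
move=> Kc x clx.
have usc_dist : usc d (fun y => - d y x).
  move=> y t lt_t; exists (t + d y x); split; first lra.
  by move=> z dyz; have := metric_triangle y z x; lra.
have [y Ky] : exists2 y, K y & 0 <= - d y x.
  apply: usc_compact_ge => // t t0; have [y [Ky dxy]] := clx (- t) ltac:(lra).
  by exists y => //; rewrite metricC in dxy; lra.
have := metric_ge0 y x; rewrite oppr_ge0 => dyx0 dyx.
by rewrite -(@metric_eq0 y x) //; apply/eqP; rewrite eq_le dyx dyx0.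
Qed.

Lemma usc_compact_max (K : set X) (u : X -> R) : dcompact d K -> K !=set0 ->
  usc d u -> has_ubound (u @` K) -> exists2 y, K y & forall z, K z -> u z <= u y.
Proof.
move=> Kc [x0 Kx0] uc ub.
have supK : has_sup (u @` K) by split => //; exists (u x0), x0.
have [y Ky le_sup] : exists2 y, K y & sup (u @` K) <= u y.
  apply: usc_compact_ge => // t lt_sup.
  have [_ [x Kx <-] lt_ux] := sup_adherent (eps := sup (u @` K) - t) ltac:(lra) supK.
  by exists x => //; lra.
exists y => // z Kz; apply: le_trans le_sup.
by apply: sup_upper_bound => //; exists z.
Qed.

Lemma closure_compact_eq (S A : set X) : S `<=` A -> A `<=` dclosure d S ->
  dcompact d A -> dclosure d S = A.
Proof.
move=> SA Acl Ac; apply/seteqP; split => //.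
by apply: subset_trans (dcompact_closed Ac); apply: closure_mono.
Qed.

Lemma dclosedI (A B : set X) : dclosed A -> dclosed B -> dclosed (A `&` B).
Proof.
move=> Acl Bcl x clx; split; [apply: Acl|apply: Bcl];
  by apply: closure_mono clx => y [].
Qed.

Section Continuous.
Variable f : X -> X.
Hypothesis fc : dcontinuous d f.

Lemma dcompact_image (K : set X) : dcompact d K -> dcompact d (f @` K).
Proof.
move=> Kc I U Uo cover.
pose V i := f @^-1` U i.
have Vo i : dopen d (V i).
  move=> x Ufx; have [r [r0 ballU]] := Uo i (f x) Ufx.
  by have [s [s0 ballf]] := fc x r0; exists s; split => // y /ballf /ballU.
have [n [g gcover]] := Kc I V Vo (fun x Kx => cover (f x) (ex_intro2 _ _ x Kx erefl)).
by exists n, g => _ [x Kx <-]; apply: gcover.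
Qed.

Lemma inK_image (K : set X) : inK d K -> inK d (f @` K).
Proof. by case=> [[x Kx] Kc]; split; [exists (f x), x|apply: dcompact_image]. Qed.

Lemma inK_iter_image k (K : set X) : inK d K -> inK d (iter k (image_map f) K).
Proof. by move=> KK; elim: k => //= k; apply: inK_image. Qed.

Lemma image_closure_sub (A : set X) : f @` dclosure d A `<=` dclosure d (f @` A).
Proof.
move=> _ [x clx <-] e e0; have [r [r0 ballf]] := fc x e0.
by have [y [Ay dxy]] := clx r r0; exists (f y); split; [exists y | apply: ballf].
Qed.

Lemma dclosed_fibre y : dclosed [set x | f x = y].
Proof.
move=> x clx /=; apply: contrapT => fxy.
have [r [r0 ballf]] := fc x (metric_gt0 fxy).
have [z [fzy dxz]] := clx r r0.
by have := ballf z dxz; rewrite fzy ltxx.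
Qed.

End Continuous.
End MetricSpace.

Section Hausdorff.
Variables (R : realType) (T : Type) (dist : T -> T -> R).

Definition near_sets (A B : set T) (e : R) :=
  (forall a, A a -> exists2 b, B b & dist a b < e) /\
  (forall b, B b -> exists2 a, A a & dist a b < e).

Lemma hausdorff_le (A B : set T) e : near_sets A B e -> (hausdorff dist A B <= e%:E)%E.
Proof.
case=> nearA nearB; rewrite /hausdorff ge_max; apply/andP; split; apply: ge_ereal_sup.
  move=> _ [a Aa <-]; have [b Bb dab] := nearA a Aa.
  by apply: (@le_trans _ _ (dist a b)%:E); [apply: ereal_inf_lbound; exists b|rewrite lee_fin ltW].
move=> _ [b Bb <-]; have [a Aa dab] := nearB b Bb.
by apply: (@le_trans _ _ (dist a b)%:E); [apply: ereal_inf_lbound; exists a|rewrite lee_fin ltW].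
Qed.

Lemma hausdorff_lt (A B : set T) e : (hausdorff dist A B < e%:E)%E -> near_sets A B e.
Proof.
rewrite /hausdorff gt_max => /andP[ltA ltB]; split.
  move=> a Aa; have /ereal_inf_lt[_ [b Bb <-]] : (ereal_inf [set (dist a b)%:E | b in B] < e%:E)%E.
    by apply: le_lt_trans ltA; apply: ereal_sup_ubound; exists a.
  by rewrite lte_fin; exists b.
move=> b Bb; have /ereal_inf_lt[_ [a Aa <-]] : (ereal_inf [set (dist a b)%:E | a in A] < e%:E)%E.
  by apply: le_lt_trans ltB; apply: ereal_sup_ubound; exists b.
by rewrite lte_fin; exists a.
Qed.

End Hausdorff.

Lemma inI0 {R : realType} : inI (0 : R). Proof. by rewrite /inI /= lexx ler01. Qed.
Lemma inI1 {R : realType} : inI (1 : R). Proof. by rewrite /inI /= lexx ler01. Qed.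
Lemma half_inI {R : realType} : inI (1 / 2 : R).
Proof. by rewrite /inI /=; apply/andP; split; lra. Qed.

Definition indicator {R : realType} {X : Type} (A : set X) : X -> R :=
  fun x => if `[< A x >] then 1 else 0.

Section FuzzyLevels.
Variables (R : realType) (X : Type) (d : X -> X -> R).
Hypothesis dm : is_metric d.

Lemma levelE (u : X -> R) a : 0 < a -> level d u a = [set x | a <= u x].
Proof. by rewrite /level => ->. Qed.

Lemma level0E (u : X -> R) : level d u 0 = dclosure d [set x | 0 < u x].
Proof. by rewrite /level ltxx. Qed.

Lemma level_sub0 (u : X -> R) a : 0 < a -> level d u a `<=` level d u 0.
Proof. by move=> a0 x; rewrite levelE // level0E /= => ax; apply: (closure_sub dm) => /=; lra. Qed.

Lemma level_antitone (u : X -> R) a b : 0 <= a -> a <= b -> level d u b `<=` level d u a.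
Proof.
rewrite le0r => /orP[/eqP->|a0] ab; last first.
  by rewrite !levelE ?(lt_le_trans a0 ab) // => x /(le_trans ab).
by rewrite le0r in ab; case/orP: ab => [/eqP->//|/level_sub0].
Qed.

Lemma dclosed_level (u : X -> R) a : usc d u -> dclosed d (level d u a).
Proof.
move=> uc; have [a0|] := ltrP 0 a; last first.
  by rewrite /level leNgt => /negbTE->; apply: dclosed_closure.
rewrite levelE // => x clx /=; rewrite leNgt; apply/negP => uxa.
have [r [r0 ball_lt]] := uc x a uxa; have [y [/= ay dxy]] := clx r r0.
by have := ball_lt y dxy; lra.
Qed.

Lemma inF_level (u : X -> R) a : inF d u -> inI a -> inK d (level d u a).
Proof.
case=> _ [uc [u0c [x1 ux1]]] /andP[a0 a1].
have ne : level d u a !=set0 by exists x1; apply: level_antitone ux1.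
split => //; apply: (dcompact_closed_sub u0c) => //.
- exact: level_antitone.
- exact: dclosed_level.
Qed.

Lemma inF_intro (u : X -> R) : (forall x, 0 <= u x <= 1) ->
  (forall a, inI a -> inK d (level d u a)) -> inF d u.
Proof.
move=> u01 uK; split => //; split; last first.
  by split; [case: (uK 0 inI0)|case: (uK 1 inI1)].
move=> x t ltt; have [t1|t1] := ltrP 1 t.
  by exists 1; split => // y _; case/andP: (u01 y) => _; lra.
have t0 : 0 < t by case/andP: (u01 x) => ux0 _; lra.
have [_ tK] := uK t ltac:(rewrite /inI /= t1 ltW //).
have xt : ~ level d u t x by rewrite levelE //= => tx; lra.
have [r r0 far] := dclosed_ball_compl (dcompact_closed dm tK) xt.
exists r; split => // y /far; rewrite levelE //= => nty.
by rewrite ltNge; apply/negP.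
Qed.

Lemma fuzzy_eq_levels (u v : X -> R) : (forall x, 0 <= u x <= 1) ->
  (forall x, 0 <= v x <= 1) ->
  (forall a, 0 < a -> a <= 1 -> level d u a = level d v a) -> u = v.
Proof.
move=> u01 v01 uv; apply: funext => x.
wlog le_uv : u v u01 v01 uv / u x <= v x.
  move=> wlog_uv; have [le_uv|/ltW le_vu] := lerP (u x) (v x); first exact: wlog_uv.
  by symmetry; apply: wlog_uv => // a a0 a1; rewrite uv.
apply/eqP; rewrite eq_le le_uv /=; case/andP: (u01 x) => ux0 _; case/andP: (v01 x) => _ vx1.
have [vx0|] := ltrP 0 (v x); last by move/le_trans; apply.
have : level d v (v x) x by rewrite levelE //= lexx.
by rewrite -uv // levelE.
Qed.

Lemma indicator_01 (A : set X) x : 0 <= (indicator A x : R) <= 1.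
Proof. by rewrite /indicator; case: asboolP; rewrite ?lexx ?ler01. Qed.

Lemma indicator_gt0 (A : set X) x : 0 < (indicator A x : R) <-> A x.
Proof. by rewrite /indicator; case: asboolP; rewrite ?ltr01 ?ltxx. Qed.

Lemma level_indicator (A : set X) a : 0 < a -> a <= 1 -> level d (indicator A) a = A.
Proof.
move=> a0 a1; rewrite levelE //; apply/seteqP; split => x /=; rewrite /indicator.
  by case: asboolP => // _; lra.
by case: asboolP.
Qed.

Lemma level0_indicator (A : set X) : dclosed d A -> level d (indicator A) 0 = A.
Proof.
move=> Acl; rewrite level0E; apply/seteqP; split.
  by apply: subset_trans Acl; apply: closure_mono => x /indicator_gt0.
by move=> x Ax; apply: (closure_sub dm) => /=; apply/indicator_gt0.
Qed.

Lemma inF_indicator (A : set X) : inK d A -> inF d (indicator A).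
Proof.
move=> AK; apply: inF_intro => [x|a /andP[]]; first exact: indicator_01.
rewrite le0r => /orP[/eqP->|a0] a1; last by rewrite level_indicator.
by rewrite level0_indicator //; case: AK => _ /(dcompact_closed dm).
Qed.

End FuzzyLevels.

Section Zadeh.
Variables (R : realType) (X : Type) (d : X -> X -> R).
Hypothesis dm : is_metric d.
Variable f : X -> X.
Hypothesis fc : dcontinuous d f.

Lemma zadeh_ge (u : X -> R) x : (forall x, u x <= 1) -> u x <= zadeh f u (f x).
Proof.
move=> u1; rewrite /zadeh; case: asboolP => [_|[]]; last by exists x.
by apply: ub_le_sup; [exists 1 => _ [y _ <-]|exists x].
Qed.

Lemma zadeh_gt (u : X -> R) y t : 0 <= t -> t < zadeh f u y ->
  exists2 x, f x = y & t < u x.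
Proof.
move=> t0; rewrite /zadeh; case: asboolP => [[x0 fx0] lt_sup|_]; last by lra.
apply: contrapT => noattain; move: lt_sup; apply/negP; rewrite -leNgt.
apply: ge_sup; first by exists (u x0), x0.
by move=> _ [x /= fx <-]; rewrite leNgt; apply/negP => ltu; apply: noattain; exists x.
Qed.

Lemma zadeh_01 (u : X -> R) : (forall x, 0 <= u x <= 1) -> forall y, 0 <= zadeh f u y <= 1.
Proof.
move=> u01 y; rewrite /zadeh; case: asboolP => [[x0 fx0]|_]; last by rewrite lexx ler01.
have [ux0 _] := andP (u01 x0); apply/andP; split.
  apply: le_trans ux0 _; apply: ub_le_sup; last by exists x0.
  by exists 1 => _ [z _ <-]; case/andP: (u01 z).
by apply: ge_sup; [exists (u x0), x0|move=> _ [z _ <-]; case/andP: (u01 z)].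
Qed.

Lemma zadeh_sup_attained (u : X -> R) y a : inF d u -> 0 < a -> a <= zadeh f u y ->
  exists2 x, f x = y & a <= u x.
Proof.
move=> [_ [uc [u0c _]]] a0 a_le.
pose K := [set x | f x = y] `&` level d u 0.
have Kcl : dclosed d K by apply: dclosedI; [apply: dclosed_fibre|apply: dclosed_level].
have [x0 fx0 ux0] := zadeh_gt (lexx 0) (lt_le_trans a0 a_le).
have Kc : dcompact d K.
  apply: (dcompact_closed_sub u0c) => //; first by move=> x [].
  by exists x0; split => //; rewrite level0E; apply: (closure_sub dm).
have [x [fx _] ax] : exists2 x, K x & a <= u x.
  apply: (usc_compact_ge dm Kc uc) => t lt_ta.
  have [x fx] : exists2 x, f x = y & Num.max t 0 < u x.
    by apply: zadeh_gt; rewrite ?le_max ?lexx ?orbT // gt_max; apply/andP; split; lra.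
  rewrite gt_max => /andP[ltu ux_pos]; exists x => //; split => //.
  by rewrite level0E; apply: (closure_sub dm).
by exists x.
Qed.

Lemma level_zadeh (u : X -> R) a : inF d u -> inI a ->
  level d (zadeh f u) a = f @` level d u a.
Proof.
move=> uF /andP[]; have [u01 [_ [u0c _]]] := uF.
have u1 x : u x <= 1 by case/andP: (u01 x).
rewrite le0r => /orP[/eqP->|a0] _.
  rewrite !level0E; apply: (closure_compact_eq dm).
  - move=> y /(zadeh_gt (lexx 0)) [x <- ux].
    by exists x => //; apply: (closure_sub dm).
  - move=> _ [x cl_x <-]; apply: (closure_mono _ (image_closure_sub fc (imageP f cl_x))).
    by move=> _ [y /= uy <-]; apply: lt_le_trans uy (zadeh_ge _ u1).
  - by rewrite -level0E; apply: dcompact_image.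
rewrite !levelE //; apply/seteqP; split => [y /= /(zadeh_sup_attained uF a0)|].
  by case=> x fx ax; exists x.
by move=> _ [x /= ax <-]; apply: le_trans ax (zadeh_ge _ u1).
Qed.

Lemma inF_zadeh (u : X -> R) : inF d u -> inF d (zadeh f u).
Proof.
move=> uF; apply: (inF_intro dm); first by apply: zadeh_01; case: uF.
by move=> a aI; rewrite level_zadeh //; apply/inK_image/(inF_level dm).
Qed.

Lemma inF_iter_zadeh k (u : X -> R) : inF d u -> inF d (iter k (zadeh f) u).
Proof. by move=> uF; elim: k => //= k; apply: inF_zadeh. Qed.

Lemma level_iter_zadeh k (u : X -> R) a : inF d u -> inI a ->
  level d (iter k (zadeh f) u) a = iter k (image_map f) (level d u a).
Proof.
move=> uF aI; elim: k => //= k IH.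
by rewrite level_zadeh ?IH //; apply: inF_iter_zadeh.
Qed.

Lemma iter_zadeh_indicator k (A : set X) : inK d A ->
  iter k (zadeh f) (indicator A : X -> R) = indicator (iter k (image_map f) A).
Proof.
move=> AK; apply: (fuzzy_eq_levels (d := d)); [|exact: indicator_01|move=> a a0 a1].
  by have [] := inF_iter_zadeh k (inF_indicator dm AK).
rewrite level_iter_zadeh ?level_indicator //; first exact: inF_indicator.
by rewrite /inI /= a1 ltW.
Qed.

End Zadeh.

Section FuzzyMetrics.
Variables (R : realType) (X : Type) (d : X -> X -> R).
Hypothesis dm : is_metric d.

Definition levels_near (W V : X -> R) (e : R) :=
  forall a, inI a -> near_sets d (level d W a) (level d V a) e.

Lemma d_inf_le (W V : X -> R) e : levels_near W V e -> (d_inf d W V <= e%:E)%E.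
Proof. by move=> WV; apply: ge_ereal_sup => _ [a aI <-]; apply/hausdorff_le/WV. Qed.

Lemma homeoI_id : homeoI (@id R).
Proof.
do 3!split => //; first by move=> b bI; exists b.
split; first by move=> a _ e e0; exists e.
by exists id; split => // a _ e e0; exists e.
Qed.

Lemma d_0_le (W V : X -> R) e : 0 < e -> levels_near W V e -> (d_0 d W V <= e%:E)%E.
Proof.
move=> e0 WV; apply: ereal_inf_lbound; exists e => //; split => //.
exists id; split; first exact: homeoI_id.
split; last exact: d_inf_le.
by apply: ge_ereal_sup => _ [a _ <-]; rewrite subrr normr0 lee_fin ltW.
Qed.

Lemma dbar_same_height x y a : dbar d (x, a) (y, a) = d x y.
Proof. by rewrite /dbar /= subrr normr0; apply/max_idPl/metric_ge0. Qed.

Lemma dbarC p q : dbar d p q = dbar d q p.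
Proof. by rewrite /dbar (metricC dm) distrC. Qed.

Section OneSided.
Variables (W V : X -> R) (e : R).
Hypothesis V0 : forall x, 0 <= V x.
Hypothesis WV : forall a, inI a -> forall x, level d W a x ->
  exists2 y, level d V a y & d x y < e.

Lemma sendo_near p : sendo d W p -> exists2 q, sendo d V q & dbar d p q < e.
Proof.
case: p => x a [[/= aI aWx] W0x]; have /andP[] := aI; rewrite le0r => /orP[/eqP a0|a0] _.
  subst a; have [y V0y dxy] := WV aI W0x.
  by exists (y, 0); rewrite ?dbar_same_height //; do 2!split => //=.
have Wax : level d W a x by rewrite levelE.
have [y Vay dxy] := WV aI Wax.
exists (y, a); rewrite ?dbar_same_height //; split; last exact: level_sub0 Vay.
by split => //=; move: Vay; rewrite levelE.
Qed.

Lemma endo_near p : 0 < e -> endo W p -> exists2 q, endo V q & dbar d p q < e.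
Proof.
case: p => x a e0 [/= aI aWx]; have /andP[] := aI; rewrite le0r => /orP[/eqP a0|a0] _.
  by subst a; exists (x, 0); rewrite ?dbar_same_height ?(metric_xx dm) //; split.
have Wax : level d W a x by rewrite levelE.
have [y Vay dxy] := WV aI Wax.
by exists (y, a); rewrite ?dbar_same_height //; split => //=; move: Vay; rewrite levelE.
Qed.

End OneSided.

Lemma levels_near_sym (W V : X -> R) e : levels_near W V e -> levels_near V W e.
Proof.
move=> WV a aI; have [WVa VWa] := WV a aI; split.
  by move=> y /VWa [x Wx dxy]; exists x; rewrite // (metricC dm).
by move=> x /WVa [y Vy dxy]; exists y; rewrite // (metricC dm).
Qed.

Lemma d_S_le (W V : X -> R) e : inF d W -> inF d V -> levels_near W V e ->
  (d_S d W V <= e%:E)%E.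
Proof.
move=> [W01 _] [V01 _] WV; apply: hausdorff_le; split => [p|q] Sp.
  by apply: sendo_near Sp => [x|a aI]; [case/andP: (V01 x)|case: (WV a aI)].
have [p Sq dqp] := sendo_near (fun x => proj1 (andP (W01 x)))
  (fun a aI => (levels_near_sym WV aI).1) Sp.
by exists p; rewrite // dbarC.
Qed.

Lemma d_E_le (W V : X -> R) e : 0 < e -> inF d W -> inF d V -> levels_near W V e ->
  (d_E d W V <= e%:E)%E.
Proof.
move=> e0 [W01 _] [V01 _] WV; apply: hausdorff_le; split => [p|q] Ep.
  by apply: endo_near Ep => // [x|a aI]; [case/andP: (V01 x)|case: (WV a aI)].
have [p Eq dqp] := endo_near (fun x => proj1 (andP (W01 x)))
  (fun a aI => (levels_near_sym WV aI).1) e0 Ep.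
by exists p; rewrite // dbarC.
Qed.

Lemma homeoI_fix0 (xi : R -> R) : homeoI xi -> xi 0 = 0.
Proof.
case=> mono [xiI [onto _]]; have [a [/andP[a0 a1] xia]] := onto 0 inI0.
move: a0; rewrite le0r => /orP[/eqP a0|a0]; first by rewrite a0 in xia.
have := mono 0 a (lexx 0) a0 a1; rewrite xia.
by have /andP[] := xiI 0 inI0; lra.
Qed.

Lemma homeoI_fix1 (xi : R -> R) : homeoI xi -> xi 1 = 1.
Proof.
case=> mono [xiI [onto _]]; have [a [/andP[a0 a1] xia]] := onto 1 inI1.
move: a1; rewrite le_eqVlt => /orP[/eqP a1|a1]; first by rewrite a1 in xia.
have := mono a 1 a0 a1 (lexx 1); rewrite xia.
by have /andP[] := xiI 1 inI1; lra.
Qed.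

Lemma homeoI_indicator (xi : R -> R) (E : set X) : homeoI xi ->
  xi \o indicator E = indicator E.
Proof.
move=> xiH; apply: funext => x; rewrite /= /indicator.
by case: asboolP => _; [apply: homeoI_fix1|apply: homeoI_fix0].
Qed.

Lemma d_inf_indicator_gt (W : X -> R) (E : set X) e :
  (d_inf d W (indicator E) < e%:E)%E -> (hausdorff d (level d W (1 / 2)) E < e%:E)%E.
Proof.
move=> lt_e; apply: le_lt_trans lt_e.
have E_half : level d (indicator E) (1 / 2) = E by apply: level_indicator; lra.
rewrite -{1}E_half.
by apply: ereal_sup_ubound; exists (1 / 2) => //; exact: half_inI.
Qed.

Lemma d_0_indicator_gt (W : X -> R) (E : set X) e :
  (d_0 d W (indicator E) < e%:E)%E -> (hausdorff d (level d W (1 / 2)) E < e%:E)%E.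
Proof.
case/ereal_inf_lt => _ [e' [e'0 [xi [xiH [_ le_e']]]] <-]; rewrite lte_fin => e'e.
apply: d_inf_indicator_gt; rewrite -(homeoI_indicator E xiH).
by apply: le_lt_trans le_e' _; rewrite lte_fin.
Qed.

(* A point at height [1/2] can only be matched at a positive height, and a
   point at height [1] only at a height above [1/2]. *)
Lemma hausdorff_half_of_graphs (SW SV : set (X * R)) (W : X -> R) (E : set X) e :
  e <= 1 / 2 ->
  (forall x, level d W (1 / 2) x -> SW (x, 1 / 2)) -> SW `<=` endo W ->
  (forall y, E y -> SV (y, 1)) -> SV `<=` endo (indicator E) ->
  (hausdorff (dbar d) SW SV < e%:E)%E -> (hausdorff d (level d W (1 / 2)) E <= e%:E)%E.
Proof.
move=> e_half WSW SWW ESV SVE /hausdorff_lt[nearW nearV]; apply: hausdorff_le; split.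
  move=> x /WSW /nearW [[y b] /SVE [/= _ b_ind]].
  rewrite /dbar gt_max ltr_distl /= => /andP[dxy /andP[_ lt_b]].
  by exists y => //; apply/indicator_gt0; lra.
move=> y /ESV /nearV [[x b] /SWW [/= _ b_W]].
rewrite /dbar gt_max ltr_distl /= => /andP[dxy /andP[lt_b _]].
by exists x => //; rewrite levelE /=; lra.
Qed.

Lemma d_S_indicator_le (W : X -> R) (E : set X) e : e <= 1 / 2 ->
  (d_S d W (indicator E) < e%:E)%E -> (hausdorff d (level d W (1 / 2)) E <= e%:E)%E.
Proof.
move=> e_half; apply: hausdorff_half_of_graphs => // [x Wx|p []//|y Ey|p []//].
  split; last by apply: (level_sub0 dm _ Wx); lra.
  by split; [exact: half_inI|move: Wx; rewrite levelE //=; lra].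
split; first by split; [exact: inI1|rewrite /= /indicator; case: asboolP].
by rewrite level0E; apply: (closure_sub dm); apply/indicator_gt0.
Qed.

Lemma d_E_indicator_le (W : X -> R) (E : set X) e : e <= 1 / 2 ->
  (d_E d W (indicator E) < e%:E)%E -> (hausdorff d (level d W (1 / 2)) E <= e%:E)%E.
Proof.
move=> e_half; apply: hausdorff_half_of_graphs => // [x Wx|y Ey].
  by split; [exact: half_inI|move: Wx; rewrite levelE //=; lra].
by split; [exact: inI1|rewrite /= /indicator; case: asboolP].
Qed.

End FuzzyMetrics.

Lemma inI_grid (R : realType) (G : seq R) g :
  all (fun g => 0 < g <= 1) G -> g \in G -> inI g.
Proof. by move=> /allP G01 /G01 /andP[/ltW g0 g1]; rewrite /inI /= g0 g1. Qed.

Section Grid.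
Variables (R : realType) (X : Type) (d : X -> X -> R).
Hypothesis dm : is_metric d.

Definition level_grid (w : X -> R) (e : R) (G : seq R) :=
  forall x, level d w 0 x ->
    exists2 g, g \in G & w x <= g /\ exists2 y, level d w g y & d x y < e.

Lemma level_grid_sub (w : X -> R) e (G G' : seq R) :
  {subset G <= G'} -> level_grid w e G -> level_grid w e G'.
Proof. by move=> GG' wG x /wG [g /GG' gG' rest]; exists g. Qed.

Lemma fuzzy_cball_max (w : X -> R) z r : inF d w -> level d w 0 z -> 0 <= r ->
  exists2 y, level d w 0 y /\ d z y <= r &
    forall v, level d w 0 v -> d z v <= r -> w v <= w y.
Proof.
move=> [w01 [wc [w0c _]]] w0z r0.
pose K := level d w 0 `&` [set y | d z y <= r].
have Kz : K z by split => //=; rewrite (metric_xx dm).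
have Kc : dcompact d K.
  apply: (dcompact_closed_sub w0c) => [y []//||]; last by exists z.
  by apply: dclosedI; [apply: dclosed_level|apply: dclosed_cball].
have [|y Ky ymax] := usc_compact_max dm Kc (ex_intro _ _ Kz) wc.
  by exists 1 => _ [y _ <-]; case/andP: (w01 y).
by exists y => // v w0v dzv; apply: ymax.
Qed.

(* The grid consists of the maxima of [w] on finitely many closed balls of
   radius [e/3] whose open counterparts cover the support of [w]. *)
Lemma level_grid_exists (w : X -> R) e : inF d w -> 0 < e ->
  exists2 G, all (fun g => 0 < g <= 1) G & level_grid w e G.
Proof.
move=> wF e0; have [w01 [_ [w0c _]]] := wF.
pose U z := [set v | level d w 0 z /\ d z v < e / 3].
have Uo z : dopen d (U z).
  move=> v [w0z dzv]; exists (e / 3 - d z v); split; first lra.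
  by move=> v' dvv'; split => //; have := metric_triangle dm z v v'; lra.
have cover x : level d w 0 x -> exists z, U z x.
  by move=> w0x; exists x; split => //; rewrite (metric_xx dm); lra.
have [n [c ccover]] := w0c X U Uo cover.
have /choice[y ymax] : forall k, exists y, level d w 0 (c k) ->
    (level d w 0 y /\ d (c k) y <= e / 3) /\
    forall v, level d w 0 v -> d (c k) v <= e / 3 -> w v <= w y.
  move=> k; have [w0ck|] := EM (level d w 0 (c k)); last by exists (c k).
  by have [|y] := fuzzy_cball_max (r := e / 3) wF w0ck; [lra|exists y].
exists [seq g <- map (w \o y) (iota 0 n) | 0 < g].
  apply/allP => g; rewrite mem_filter => /andP[g0 /mapP[k _ gE]].
  by rewrite g0; case/andP: (w01 (y k)); rewrite gE.
move=> x w0x; have [k [kn [w0ck dckx]]] := ccover x w0x.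
have [[w0yk dcky] le_wy] := ymax k w0ck.
have wyk_gt0 : 0 < w (y k).
  move: (w0x); rewrite level0E => /(_ (e / 3 - d (c k) x) ltac:(lra)) [z [/= wz dxz]].
  apply: (lt_le_trans wz); apply: le_wy; first by rewrite level0E; apply: (closure_sub dm).
  by have := metric_triangle dm (c k) x z; lra.
exists (w (y k)).
  by rewrite mem_filter wyk_gt0 /=; apply/mapP; exists k; rewrite // mem_iota.
split; first by apply: le_wy => //; lra.
exists (y k); first by rewrite levelE //= lexx.
by have := metric_triangle dm x (c k) (y k); rewrite (metricC dm x (c k)); lra.
Qed.

End Grid.

Section GridFuzzySet.
Variables (R : realType) (X : Type) (d : X -> X -> R).
Hypothesis dm : is_metric d.

Definition grid_fuzzy (G : seq R) (C : R -> set X) (x : X) : R :=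
  \big[Num.max/0]_(g <- G | `[< C g x >]) g.

Definition grid_cut (G : seq R) (C : R -> set X) (a : R) : set X :=
  \bigcup_(g in [set` [seq g <- G | a <= g]]) C g.

Lemma grid_cutP (G : seq R) (C : R -> set X) a x :
  grid_cut G C a x <-> exists2 g, g \in G & a <= g /\ C g x.
Proof.
split => [[g /= /[!mem_filter] /andP[ag gG] Cgx]|[g gG [ag Cgx]]]; first by exists g.
by exists g; rewrite //= mem_filter ag.
Qed.

Lemma grid_fuzzy_ge (G : seq R) (C : R -> set X) a x : 0 < a ->
  a <= grid_fuzzy G C x <-> grid_cut G C a x.
Proof.
move=> a0; rewrite grid_cutP /grid_fuzzy; elim: G => [|g G IH].
  by rewrite big_nil; split => [|[]//]; lra.
rewrite big_cons; case: asboolP => Cgx; last first.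
  rewrite IH; split => [[h hG rest]|[h /[!inE] /orP[/eqP hg|hG] [ah Chx]]].
  - by exists h; rewrite // inE hG orbT.
  - by rewrite hg in Chx.
  - by exists h.
rewrite le_max; split => [/orP[ag|/IH[h hG rest]]|[h /[!inE] /orP[/eqP->|hG] [ah Chx]]].
- by exists g; rewrite ?mem_head.
- by exists h; rewrite // inE hG orbT.
- by rewrite ah.
- by apply/orP; right; apply/IH; exists h.
Qed.

Lemma iter_image_grid_cut (f : X -> X) k (G : seq R) (C : R -> set X) a :
  iter k (image_map f) (grid_cut G C a) = grid_cut G (fun g => iter k (image_map f) (C g)) a.
Proof. exact: iter_image_bigcup. Qed.

Lemma grid_cut_near (w : X -> R) (G : seq R) (A : R -> set X) e :
  all (fun g => 0 < g <= 1) G -> level_grid d w e G ->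
  (forall g, g \in G -> near_sets d (A g) (level d w g) e) ->
  forall a, inI a -> near_sets d (grid_cut G A a) (level d w a) (e + e).
Proof.
move=> G01 wG near a /andP[a0 _]; split.
  move=> x /grid_cutP[g gG [ag Agx]]; have [y wgy dxy] := (near g gG).1 x Agx.
  exists y; first exact: (level_antitone dm a0 ag).
  by have := metric_ge0 dm x y; lra.
move=> y way; have [g gG [wyg [y' wgy' dyy']]] := wG y (level_antitone dm (lexx 0) a0 way).
have [x Agx dxy'] := (near g gG).2 y' wgy'.
exists x; last by have := metric_triangle dm x y' y; rewrite (metricC dm y'); lra.
apply/grid_cutP; exists g => //; split => //; move: a0 way.
rewrite le0r => /orP[/eqP-> _|a0]; first by have /andP[/ltW] := allP G01 g gG.
by rewrite levelE //= => ay; apply: le_trans wyg.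
Qed.

Variables (G : seq R) (C : R -> set X).
Hypothesis G01 : all (fun g => 0 < g <= 1) G.
Hypothesis G1 : 1 \in G.
Hypothesis CK : forall g, g \in G -> inK d (C g).

Lemma grid_fuzzy_01 x : 0 <= grid_fuzzy G C x <= 1.
Proof.
rewrite /grid_fuzzy big_seq_cond.
apply: (big_ind (fun y => 0 <= y <= 1)) => [|y z /andP[y0 y1] /andP[z0 z1]|g].
- by rewrite lexx ler01.
- by rewrite le_max y0 ge_max y1 z1.
- by case/andP => /(allP G01) /andP[/ltW-> ->].
Qed.

Lemma inK_grid_cut a : a <= 1 -> inK d (grid_cut G C a).
Proof.
move=> a1; have G1a : 1 \in [seq g <- G | a <= g] by rewrite mem_filter a1.
split; first by have [[x C1x] _] := CK G1; exists x; apply/grid_cutP; exists 1.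
apply: dcompact_bigcup_seq; first by apply/negP => /eqP nil; rewrite nil in G1a.
by move=> g; rewrite mem_filter => /andP[_ /CK[]].
Qed.

Lemma level_grid_fuzzy a : inI a -> level d (grid_fuzzy G C) a = grid_cut G C a.
Proof.
case/andP; rewrite le0r => /orP[/eqP->|a0] a1; last first.
  by rewrite levelE //; apply/seteqP; split => x /grid_fuzzy_ge; apply.
rewrite level0E; apply: (closure_compact_eq dm); last by case: (inK_grid_cut ler01).
- move=> x /= x0; have /(grid_fuzzy_ge _ _ _ x0)/grid_cutP[g gG [_ Cgx]] := lexx (grid_fuzzy G C x).
  by apply/grid_cutP; exists g => //; split => //; have /andP[/ltW] := allP G01 g gG.
- move=> x /grid_cutP[g gG [_ Cgx]]; apply: (closure_sub dm) => /=.
  have /andP[g0 _] := allP G01 g gG.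
  by apply: (lt_le_trans g0); apply/(grid_fuzzy_ge _ _ _ g0)/grid_cutP; exists g.
Qed.

Lemma inF_grid_fuzzy : inF d (grid_fuzzy G C).
Proof.
apply: (inF_intro dm); first exact: grid_fuzzy_01.
by move=> a aI; rewrite level_grid_fuzzy //; apply: inK_grid_cut; case/andP: aI.
Qed.

End GridFuzzySet.

Section Specification.
Variables (R : realType) (X : Type) (d : X -> X -> R).
Hypothesis dm : is_metric d.
Variable f : X -> X.
Hypothesis fc : dcontinuous d f.

Lemma iter_zadeh_grid_fuzzy k (G : seq R) (C : R -> set X) :
  all (fun g => 0 < g <= 1) G -> 1 \in G -> (forall g, g \in G -> inK d (C g)) ->
  iter k (zadeh f) (grid_fuzzy G C) = grid_fuzzy G (fun g => iter k (image_map f) (C g)).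
Proof.
move=> G01 G1 CK; have uF := inF_grid_fuzzy dm G01 G1 CK.
have fCK g : g \in G -> inK d (iter k (image_map f) (C g)) by move/CK/(inK_iter_image fc).
apply: (fuzzy_eq_levels (d := d)); [by case: (inF_iter_zadeh dm fc k uF)|exact: grid_fuzzy_01|].
move=> a a0 a1; have aI : inI a by rewrite /inI /= ltW.
by rewrite level_iter_zadeh // !level_grid_fuzzy // iter_image_grid_cut.
Qed.

Lemma level_grid_family (v : nat -> X -> R) (s : nat) (j : nat -> nat) e : 0 < e ->
  (forall r, (r < s)%N -> inF d (v r)) ->
  exists2 G, all (fun g => 0 < g <= 1) G & 1 \in G /\
    forall r k, (r < s)%N -> (k <= j r)%N -> level_grid d (iter k (zadeh f) (v r)) e G.
Proof.
move=> e0 vF; have [G G01 Ggrid] : exists2 G, all (fun g => 0 < g <= 1) G &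
    forall r, (r < s)%N -> forall k, (k < (j r).+1)%N -> level_grid d (iter k (zadeh f) (v r)) e G.
  apply: common_superseq => [r G G' GG' Gr k kj|r rs]; first exact: level_grid_sub GG' (Gr k kj).
  apply: common_superseq => [k G G'|k _]; first exact: level_grid_sub.
  by apply: level_grid_exists => //; apply/inF_iter_zadeh/vF.
exists (1 :: G); first by rewrite /= ltr01 lexx.
split => [|r k rs kj]; first exact: mem_head.
by apply: level_grid_sub (Ggrid r rs k kj) => g gG; rewrite inE gG orbT.
Qed.

Lemma spec_K_to_F (rho : (X -> R) -> (X -> R) -> \bar R) :
  (forall W V e, inF d W -> inF d V -> 0 < e -> levels_near d W V e -> (rho W V <= e%:E)%E) ->
  spec_prop (inK d) (hausdorff d) (image_map f) -> spec_prop (inF d) rho (zadeh f).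
Proof.
move=> rho_le Kspec eps eps0; have [N specN] := Kspec (eps / 4) ltac:(lra).
exists N => s v i j s2 vF i0 ij gaps.
have [G G01 [G1 Ggrid]] := level_grid_family j (ltac:(lra) : 0 < eps / 4) vF.
have /choice[C C_spec] : forall g, exists Cg : set X,
    (g \in G -> inK d Cg /\ forall r k, (r < s)%N -> (i r <= k <= j r)%N ->
      (hausdorff d (iter k (image_map f) Cg) (iter k (image_map f) (level d (v r) g))
        < (eps / 4)%:E)%E) /\
    iter (N + j s.-1) (image_map f) Cg = Cg.
  move=> g; have [gG|_] := boolP (g \in G); last first.
    by exists set0; split => //; elim: (N + _)%N => //= n ->; rewrite /image_map image_set0.
  have [Cg [CgK [track per]]] := specN s (fun r => level d (v r) g) i j s2
    (fun r rs => inF_level dm (vF r rs) (inI_grid G01 gG)) i0 ij gaps.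
  by exists Cg.
have CK g : g \in G -> inK d (C g) by move=> /(proj1 (C_spec g))[].
exists (grid_fuzzy G C); split; first exact: inF_grid_fuzzy.
split; last first.
  by rewrite iter_zadeh_grid_fuzzy //; congr grid_fuzzy; apply: funext => g; rewrite (proj2 (C_spec g)).
move=> r k rs /andP[ik kj]; have vkF := inF_iter_zadeh dm fc k (vF r rs).
apply: (@le_lt_trans _ _ (eps / 4 + eps / 4)%:E); last by rewrite lte_fin; lra.
apply: rho_le => //; [exact/inF_iter_zadeh/inF_grid_fuzzy|lra|move=> a aI].
rewrite iter_zadeh_grid_fuzzy // level_grid_fuzzy //; last first.
  by move=> g /CK /(inK_iter_image fc).
apply: (grid_cut_near dm G01) => // [|g gG]; first exact: Ggrid.
have gI := inI_grid G01 gG; rewrite level_iter_zadeh //; last exact: vF.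
by apply: hausdorff_lt; have [_ ->] := proj1 (C_spec g) gG; rewrite ?ik.
Qed.

Lemma spec_F_to_K (rho : (X -> R) -> (X -> R) -> \bar R) :
  (forall W E e, e <= 1 / 2 -> (rho W (indicator E) < e%:E)%E ->
     (hausdorff d (level d W (1 / 2)) E <= e%:E)%E) ->
  spec_prop (inF d) rho (zadeh f) -> spec_prop (inK d) (hausdorff d) (image_map f).
Proof.
move=> rho_haus Fspec eps eps0; pose e := Num.min (eps / 2) (1 / 2).
have e0 : 0 < e by rewrite lt_min; apply/andP; split; lra.
have e_half : e <= 1 / 2 by rewrite ge_min lexx orbT.
have e_eps : e < eps by rewrite gt_min; apply/orP; left; lra.
have [N specN] := Fspec e e0; exists N => s A i j s2 AK i0 ij gaps.
have [u [uF [track per]]] := specN s (fun r => indicator (A r)) i j s2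
  (fun r rs => inF_indicator dm (AK r rs)) i0 ij gaps.
exists (level d u (1 / 2)); split; first exact: (inF_level dm uF half_inI).
split; last by rewrite -level_iter_zadeh ?per //; exact: half_inI.
move=> r k rs kk; rewrite -level_iter_zadeh //; last exact: half_inI.
apply: le_lt_trans (rho_haus _ _ e e_half _) _; last by rewrite lte_fin.
by rewrite -(iter_zadeh_indicator dm fc k (AK r rs)); apply: track.
Qed.

End Specification.

Theorem theorem4p3 (R : realType) (X : Type) (d : X -> X -> R) (f : X -> X) :
  is_metric d -> dcontinuous d f ->
  [/\ spec_prop (inK d) (hausdorff d) (image_map f) <->
        spec_prop (inF d) (d_inf d) (zadeh f),
      spec_prop (inK d) (hausdorff d) (image_map f) <->
        spec_prop (inF d) (d_0 d) (zadeh f),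
      spec_prop (inK d) (hausdorff d) (image_map f) <->
        spec_prop (inF d) (d_S d) (zadeh f)
    & spec_prop (inK d) (hausdorff d) (image_map f) <->
        spec_prop (inF d) (d_E d) (zadeh f)].
Proof.
move=> dm fc; have K_F := spec_K_to_F dm fc; have F_K := spec_F_to_K dm fc.
split; split.
- by apply: K_F => W V e _ _ _; apply: d_inf_le.
- by apply: F_K => W E e _ /d_inf_indicator_gt /ltW.
- by apply: K_F => W V e _ _; apply: d_0_le.
- by apply: F_K => W E e _ /d_0_indicator_gt /ltW.
- by apply: K_F => W V e WF VF _; apply: d_S_le.
- by apply: F_K => W E e; apply: d_S_indicator_le.
- by apply: K_F => W V e WF VF e0; apply: d_E_le.
- by apply: F_K => W E e; apply: d_E_indicator_le.
Qed.
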